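(* Let $d\ge0$, $0\le n\le d+1$, and $x=e_1z^n\in V_d$. Let $\mu_x\colon V_d\to(\mathfrak g_d^x)^\vee$ be the moment map for the stabilizer $\mathfrak g_d^x$, $\mu_x(v)(\xi)=\frac12(\xi v,v)_{V_d}$. Then the reduced scheme of its zero fibre is $$(\mu_x^{-1}(0))_{\mathrm{red}}=z^{\lfloor\frac{n-1}{2}\rfloor+1}\mathbb C[z]e_1+z^{\lfloor\frac d2\rfloor+1}V_d.$$ In particular, if $d\in\{0,1\}$ and $n=0$, then $\mu_x^{-1}(0)$ has codimension $1$ in $V_d$; otherwise it has codimension $\ge2$.
   Context: $T=\mathbb C^2=\mathbb C\langle e_1,e_2\rangle$ with standard symplectic form $(\,,\,)_T$ and standard $\mathfrak{sl}_2$-action. $V_d=T\otimes\mathbb C[z]/(z^{d+1})$, $\mathfrak g_d=\mathfrak{sl}_2\otimes\mathbb C[z]/(z^{d+1})$ acting by $(\xi z^a)(vz^b)=(\xi v)z^{a+b}$; $\mathfrak g_d^x$ is the stabilizer of $x$ in $\mathfrak g_d$. The symplectic form on $V_d$ is $(f,g)_{V_d}=\mathrm{Res}_{z=0}(f,g)_{T[z]}/z^{d+1}$, with $(\,,\,)_{T[z]}$ the $\mathbb C[z]$-bilinear extension of $(\,,\,)_T$. Subsets such as $z^m\mathbb C[z]e_1$ are understood modulo $z^{d+1}$, as subspaces of $V_d$. *)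

From HB Require Import structures.
From mathcomp Require Import all_boot all_order all_algebra.
Set Implicit Arguments. Unset Strict Implicit. Unset Printing Implicit Defensive.
Import Order.TTheory GRing.Theory Num.Theory.
Local Open Scope ring_scope.

(* C is an algebraically closed field of characteristic 0 (any
   numClosedFieldType, e.g. the complex numbers).  An element of
   T[z] = C[z]^2 = C[z] e_1 + C[z] e_2 is a column vector 'cV[{poly C}]_2
   (row 0 = e_1-coordinate, row 1 = e_2-coordinate).
   V_d = T (x) C[z]/(z^{d+1}) is modelled by the vectors all of whose entries
   have size <= d+1 (i.e. degree <= d); reduction modulo z^{d+1} is truncation
   take_poly d.+1.  g_d = sl_2 (x) C[z]/(z^{d+1}) is modelled by trace-zero
   2x2 matrices over {poly C} with entries of degree <= d. *)

Section Model.
Variable C : numClosedFieldType.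

Definition e1 : 'cV[{poly C}]_2 := delta_mx ord0 ord0.

Definition truncV (d : nat) (v : 'cV[{poly C}]_2) : 'cV[{poly C}]_2 :=
  map_mx (take_poly d.+1) v.

Definition inVd (d : nat) (v : 'cV[{poly C}]_2) : bool :=
  [forall i, (size (v i ord0) <= d.+1)%N].

Definition inGd (d : nat) (xi : 'M[{poly C}]_2) : bool :=
  (\tr xi == 0) && [forall i, [forall j, (size (xi i j) <= d.+1)%N]].

Definition actd (d : nat) (xi : 'M[{poly C}]_2) (v : 'cV[{poly C}]_2) :=
  truncV d (xi *m v).

Definition formT (f g : 'cV[{poly C}]_2) : {poly C} :=
  f ord0 ord0 * g ord_max ord0 - f ord_max ord0 * g ord0 ord0.

(* (f,g)_{V_d} = Res_{z=0} (f,g)_{T[z]} / z^{d+1} = coefficient of z^d *)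
Definition formV (d : nat) (f g : 'cV[{poly C}]_2) : C := (formT f g)`_d.

(* v lies in the zero fibre of mu_x : V_d -> (g_d^x)^vee,
   mu_x(v)(xi) = 1/2 (xi v, v)_{V_d}, for xi in the stabilizer g_d^x *)
Definition mu_zero (d : nat) (x v : 'cV[{poly C}]_2) : Prop :=
  forall xi : 'M[{poly C}]_2, inGd d xi -> actd d xi x = 0 ->
    2^-1 * formV d (actd d xi v) v = 0.

Definition Wsub (d a b : nat) (v : 'cV[{poly C}]_2) : Prop :=
  exists (p : {poly C}) (q : 'cV[{poly C}]_2),
    v = truncV d ('X^a *: (p *: e1) + 'X^b *: q).

Definition coords (d : nat) (v : 'cV[{poly C}]_2) : 'M[C]_(2, d.+1) :=
  \matrix_(i < 2, k < d.+1) (v i ord0)`_k.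

End Model.

From HB Require Import structures.
From mathcomp Require Import all_boot all_order all_algebra.
From mathcomp Require Import ring zify.
Import Order.TTheory GRing.Theory Num.Theory.
Set Implicit Arguments. Unset Strict Implicit. Unset Printing Implicit Defensive.
Local Open Scope ring_scope.

(* Write v = a e_1 + b e_2.  The stabilizer of x = z^n e_1 consists of the
   trace-free xi whose first column vanishes to order d + 1 - n, and
   (xi v, v) is the z^d-coefficient of 2 xi_11 a b + xi_12 b^2 - xi_21 a^2.
   Testing against z^(d-k) E_21 for k < n and z^(d-k) E_12 for k <= d shows
   that the coefficients of a^2 below z^n and of b^2 below z^(d+1) vanish,
   i.e. a vanishes to order ceil(n/2) and b to order floor(d/2) + 1;
   conversely, these orders kill every term in degree d.  The zero fibre is
   therefore cut out by ceil(n/2) + floor(d/2) + 1 coordinates, which gives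
   the codimension. *)

Section VanishingOrder.
Variable R : nzRingType.
Implicit Types p q : {poly R}.

Definition vanishes_to (k : nat) p := forall i, (i < k)%N -> p`_i = 0.

Lemma vanishes_toW k l p : (l <= k)%N -> vanishes_to k p -> vanishes_to l p.
Proof. by move=> lk pk i il; apply: pk; apply: leq_trans lk. Qed.

Lemma vanishes_toM k l p q :
  vanishes_to k p -> vanishes_to l q -> vanishes_to (k + l) (p * q).
Proof.
move=> pk ql i ikl; rewrite coefM big1 // => j _.
have [jk|kj] := ltnP j k; first by rewrite pk // mul0r.
by rewrite ql ?mulr0 //; have := ltn_ord j; lia.
Qed.

Lemma vanishes_toXn k : vanishes_to k ('X^k : {poly R}).
Proof. by move=> i ik; rewrite coefXn ltn_eqF. Qed.

Lemma coef_vanishes_toM d k l p q : (d < k + l)%N ->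
  vanishes_to k p -> vanishes_to l q -> (p * q)`_d = 0.
Proof. by move=> dkl pk ql; apply: vanishes_toM pk ql _ dkl. Qed.

Lemma vanishes_to_take m k p : vanishes_to k p -> vanishes_to k (take_poly m p).
Proof. by move=> pk i ik; rewrite coef_take_poly pk ?if_same. Qed.

Lemma take_poly_vanishes k p : vanishes_to k p -> take_poly k p = 0.
Proof.
by move=> pk; apply/polyP => i; rewrite coef_take_poly coef0; case: ltnP => // /pk.
Qed.

Lemma drop_polyXnK k p : vanishes_to k p -> drop_poly k p * 'X^k = p.
Proof.
by move=> pk; rewrite -[RHS](poly_take_drop k) take_poly_vanishes // add0r.
Qed.

Lemma coef_take_polyMl m k p q : (k < m)%N -> (take_poly m p * q)`_k = (p * q)`_k.
Proof.
move=> km; rewrite !coefM; apply: eq_bigr => j _.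
by rewrite coef_take_poly (leq_ltn_trans (leq_ord j) km).
Qed.

End VanishingOrder.

Arguments vanishes_toXn {R} k.

Section VanishingOrderSquare.
Variable R : idomainType.

(* If p`_i is the lowest nonzero coefficient of p, then (p * p)`_(i + i) = p`_i ^ 2 <> 0. *)
Lemma vanishes_to_sqr m (p : {poly R}) :
  vanishes_to m (p * p) <-> vanishes_to (m.+1 %/ 2) p.
Proof.
split=> [pp i|pA]; last by apply: vanishes_toW (vanishes_toM pA pA); lia.
elim/ltn_ind: i => i IH im.
have p_i : drop_poly i p * 'X^i = p by apply: drop_polyXnK => l li; apply: IH; lia.
have := pp (i + i)%N ltac:(lia).
rewrite -p_i mulrACA -exprD coefMXn ltnn subnn coefM big_ord1 subnn.
by rewrite coefMXn ltnn subnn => /eqP; rewrite mulf_eq0 orbb => /eqP.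
Qed.

End VanishingOrderSquare.

Section TwoByTwo.
Variable R : pzRingType.

Lemma ord2P (i : 'I_2) : i = ord0 \/ i = ord_max.
Proof. by case: i => [[|[|//]]] ?; [left|right]; apply: val_inj. Qed.

Lemma mulmx2E k (A : 'M[R]_2) (B : 'M[R]_(2, k)) i j :
  (A *m B) i j = A i ord0 * B ord0 j + A i ord_max * B ord_max j.
Proof.
by rewrite mxE big_ord_recr big_ord1 (_ : widen_ord _ _ = ord0) //; apply: val_inj.
Qed.

Lemma mxtrace2 (A : 'M[R]_2) : \tr A = A ord0 ord0 + A ord_max ord_max.
Proof.
by rewrite /mxtrace big_ord_recr big_ord1 (_ : widen_ord _ _ = ord0) //; apply: val_inj.
Qed.

End TwoByTwo.

Section ZeroPattern.
Variables (K : fieldType) (m n : nat) (P : {pred 'I_m * 'I_n}).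

Definition restrict_mx (M : 'M[K]_(m, n)) : 'rV[K]_#|P| :=
  \row_t M (enum_val t).1 (enum_val t).2.

Fact restrict_mx_is_linear : linear restrict_mx.
Proof. by move=> c M N; apply/rowP => t; rewrite !mxE. Qed.

HB.instance Definition _ :=
  GRing.isLinear.Build K _ _ _ restrict_mx restrict_mx_is_linear.

Definition mx_zero_on : {vspace 'M[K]_(m, n)} := lker (linfun restrict_mx).

Lemma mem_mx_zero_on M :
  (M \in mx_zero_on) = [forall ij in P, M ij.1 ij.2 == 0].
Proof.
rewrite memv_ker lfunE /=; apply/eqP/forall_inP => [/rowP M0 ij Pij|M0].
  by have := M0 (enum_rank_in Pij ij); rewrite !mxE enum_rankK_in // => ->.
by apply/rowP => t; rewrite !mxE; apply/eqP/M0/enum_valP.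
Qed.

Lemma limg_restrict_mx : limg (linfun restrict_mx) = fullv.
Proof.
apply/eqP; rewrite eqEsubv subvf; apply/subvP => w _; apply/memv_imgP.
exists (\matrix_(i, j) \sum_(t | enum_val t == (i, j)) w 0 t); first exact: memvf.
apply/rowP => t; rewrite lfunE !mxE /= (big_pred1 t) // => s /=.
by rewrite -surjective_pairing (inj_eq enum_val_inj).
Qed.

Lemma dim_mx_zero_on : \dim mx_zero_on = (m * n - #|P|)%N.
Proof.
have := limg_ker_dim (linfun restrict_mx) fullv.
rewrite capfv limg_restrict_mx !dimvf.
have -> : dim 'rV[K]_#|P| = (1 * #|P|)%N by [].
have -> : dim 'M[K]_(m, n) = (m * n)%N by [].
by rewrite mul1n => <-; rewrite addnK.
Qed.

End ZeroPattern.

Lemma card_staircase m n (b : 'I_m -> nat) : (forall i, b i <= n)%N ->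
  #|[pred ij : 'I_m * 'I_n | (ij.2 < b ij.1)%N]| = (\sum_i b i)%N.
Proof.
move=> bn; rewrite -sum1_card.
rewrite -(pair_big_dep xpredT (fun i (j : 'I_n) => j < b i)%N (fun _ _ => 1%N)).
apply: eq_bigr => i _; rewrite -(big_ord_widen n (fun _ => 1%N) (bn i)).
by rewrite sum1_card card_ord.
Qed.

Section MomentMap.
Variable C : numClosedFieldType.
Implicit Types (p : {poly C}) (v : 'cV[{poly C}]_2) (xi : 'M[{poly C}]_2).
Local Notation i1 := (@ord_max 1).
Local Notation a v := (v ord0 ord0).
Local Notation b v := (v i1 ord0).

Lemma truncVE d v i j : truncV d v i j = take_poly d.+1 (v i j).
Proof. by rewrite mxE. Qed.

Lemma formV_act d xi v :
  formV d (actd d xi v) v =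
  (xi ord0 ord0 * (a v * b v) + xi ord0 i1 * (b v * b v)
   - xi i1 ord0 * (a v * a v) - xi i1 i1 * (b v * a v))`_d.
Proof.
rewrite /formV /formT /actd !truncVE !mulmx2E coefB !coef_take_polyMl // -coefB.
by congr (coefp d _); ring.
Qed.

Lemma mu_zeroE d x v : mu_zero d x v <->
  forall xi, inGd d xi -> actd d xi x = 0 -> formV d (actd d xi v) v = 0.
Proof.
have half_neq0 : (2 : C)^-1 != 0 by rewrite invr_eq0 pnatr_eq0.
split=> mu xi Gxi xi_x; have := mu xi Gxi xi_x.
  by move/eqP; rewrite mulf_eq0 (negbTE half_neq0) => /eqP.
by move=> ->; rewrite mulr0.
Qed.

Lemma offdiag_in_Gd d p (i j : 'I_2) :
  i != j -> (size p <= d.+1)%N -> inGd d (p *: delta_mx i j).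
Proof.
move=> ij pd; apply/andP; split.
  rewrite mxtrace2 !mxE.
  by case: (ord2P i) (ord2P j) ij => -> [] ->; rewrite ?mulr0 ?addr0.
apply/forallP => k; apply/forallP => l; rewrite !mxE.
by case: (_ && _); rewrite ?mulr1 ?mulr0 ?size_poly0.
Qed.

Lemma formV_upper d k v : (k <= d)%N ->
  formV d (actd d ('X^(d - k) *: delta_mx ord0 i1) v) v = (b v * b v)`_k.
Proof.
move=> kd; rewrite formV_act !mxE /= !(mulr0, mulr1, mul0r, subr0, add0r, addr0).
by rewrite coefXnM ltnNge leq_subr subKn.
Qed.

Lemma formV_lower d k v : (k <= d)%N ->
  formV d (actd d ('X^(d - k) *: delta_mx i1 ord0) v) v = - (a v * a v)`_k.
Proof.
move=> kd; rewrite formV_act !mxE /= !(mulr0, mulr1, mul0r, subr0, add0r, addr0).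
by rewrite coefN coefXnM ltnNge leq_subr subKn.
Qed.

Section Stabilizer.
Variables d n : nat.
Local Notation x := (truncV d ('X^n *: e1 C)).

Lemma xE i : x i ord0 = if i == ord0 then take_poly d.+1 'X^n else 0.
Proof. by rewrite !mxE; case: (i == ord0); rewrite /= ?mulr1 ?mulr0 ?take_poly0r. Qed.

Lemma stab_col0_vanishes xi i : actd d xi x = 0 -> vanishes_to (d.+1 - n) (xi i ord0).
Proof.
move=> /matrixP/(_ i ord0); rewrite mxE mulmx2E !xE /= mulr0 addr0 mxE.
move=> /polyP xi_x j jn; have := xi_x (j + n)%N.
rewrite coef_take_poly coef0 ltnS (_ : j + n <= d)%N; last by lia.
by rewrite take_poly_id ?size_polyXn ?coefMXn; [rewrite ltnNge leq_addl addnK|lia].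
Qed.

Lemma actd_x_upper p : actd d (p *: delta_mx ord0 i1) x = 0.
Proof.
apply/matrixP => i j; rewrite (ord1 j) truncVE mulmx2E !xE !mxE.
by case: (ord2P i) => ->; rewrite /= ?mulr0 ?mul0r ?add0r ?take_poly0r.
Qed.

Lemma actd_x_lower k : (d < k + n)%N -> actd d ('X^k *: delta_mx i1 ord0) x = 0.
Proof.
move=> dkn; apply/matrixP => i j; rewrite (ord1 j) truncVE mulmx2E !xE !mxE.
case: (ord2P i) => -> /=; rewrite ?mulr0 ?mul0r ?addr0 ?take_poly0r // mulr1.
apply: take_poly_vanishes; apply: (@vanishes_toW _ (k + n)); first lia.
exact: vanishes_toM (vanishes_toXn k) (vanishes_to_take _ (vanishes_toXn n)).
Qed.

Hypothesis n_le : (n <= d.+1)%N.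

Lemma mu_zero_vanishes v : mu_zero d x v ->
  vanishes_to (n.+1 %/ 2) (a v) /\ vanishes_to (d %/ 2 + 1) (b v).
Proof.
move=> /mu_zeroE mu; split.
  apply/vanishes_to_sqr => k kn; apply/eqP; rewrite -oppr_eq0 -(@formV_lower d); last lia.
  apply/eqP/mu; last by apply: actd_x_lower; lia.
  by rewrite offdiag_in_Gd // size_polyXn ltnS leq_subr.
rewrite (_ : (d %/ 2 + 1 = d.+2 %/ 2)%N); last lia.
apply/vanishes_to_sqr => k kd; rewrite -(@formV_upper d); last lia.
by apply/mu/actd_x_upper; rewrite offdiag_in_Gd // size_polyXn ltnS leq_subr.
Qed.

Lemma vanishes_mu_zero v :
  vanishes_to (n.+1 %/ 2) (a v) -> vanishes_to (d %/ 2 + 1) (b v) -> mu_zero d x v.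
Proof.
move=> va vb; apply/mu_zeroE => xi /andP[tr0 _] xi_x.
have xi11 : xi i1 i1 = - xi ord0 ord0.
  by apply/eqP; rewrite -addr_eq0 addrC -mxtrace2.
have vab : vanishes_to n (a v * b v) by apply: vanishes_toW (vanishes_toM va vb); lia.
have vaa : vanishes_to n (a v * a v) by apply/vanishes_to_sqr.
have vbb : vanishes_to d.+1 (b v * b v).
  by apply/vanishes_to_sqr; rewrite (_ : (d.+2 %/ 2 = d %/ 2 + 1)%N) //; lia.
have xi_0 := stab_col0_vanishes ord0 xi_x; have xi_1 := stab_col0_vanishes i1 xi_x.
rewrite formV_act xi11 mulNr [b v * a v]mulrC !coefB coefD coefN.
rewrite !(coef_vanishes_toM _ xi_0 vab, coef_vanishes_toM _ xi_1 vaa); try lia.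
rewrite (@coef_vanishes_toM _ d 0 d.+1) //.
by rewrite !(subr0, add0r, oppr0).
Qed.

Lemma mu_zero_iff v : mu_zero d x v <->
  vanishes_to (n.+1 %/ 2) (a v) /\ vanishes_to (d %/ 2 + 1) (b v).
Proof. by split=> [/mu_zero_vanishes|[]]; [apply|apply: vanishes_mu_zero]. Qed.

End Stabilizer.
End MomentMap.

Section Subspaces.
Variable C : numClosedFieldType.
Local Notation i1 := (@ord_max 1).

Lemma Wsub_vanishes d A B (v : 'cV[{poly C}]_2) : (A <= B)%N -> inVd d v ->
  Wsub d A B v <-> vanishes_to A (v ord0 ord0) /\ vanishes_to B (v i1 ord0).
Proof.
move=> AB /forallP vd; split.
  move=> [p [q ->]]; rewrite !truncVE !mxE /=.
  split => i iA; rewrite coef_take_poly; case: ifP => // _; rewrite ?coefD !coefXnM.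
    by rewrite iA (leq_trans iA AB) addr0.
  by rewrite iA mulr0 coef0 if_same addr0.
move=> [va vb].
exists (drop_poly A (v ord0 ord0)), (drop_poly B (v i1 ord0) *: delta_mx i1 ord0).
apply/matrixP => i j; rewrite (ord1 j) truncVE !mxE.
by case: (ord2P i) => -> /=;
  rewrite !(mulr0, mulr1, addr0, add0r) mulrC drop_polyXnK // take_poly_id.
Qed.

Definition staircase d A B : {vspace 'M[C]_(2, d.+1)} :=
  mx_zero_on C [pred ik : 'I_2 * 'I_d.+1 | (ik.2 < if ik.1 == ord0 then A else B)%N].

Lemma mem_coords_staircase d A B (v : 'cV[{poly C}]_2) :
  (A <= d.+1)%N -> (B <= d.+1)%N ->
  (coords d v \in staircase d A B) <->
  vanishes_to A (v ord0 ord0) /\ vanishes_to B (v i1 ord0).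
Proof.
move=> Ad Bd; rewrite mem_mx_zero_on; split.
  move=> /forall_inP v0; split=> k kA.
    have := v0 (ord0, Ordinal (leq_trans kA Ad)); rewrite !mxE /=.
    by move=> /(_ kA)/eqP.
  have := v0 (i1, Ordinal (leq_trans kA Bd)); rewrite !mxE /=.
  by move=> /(_ kA)/eqP.
move=> [va vb]; apply/forall_inP => -[i k]; rewrite mxE /=.
by case: (ord2P i) => -> /= /[dup] ? => [/va|/vb] ->.
Qed.

Lemma dim_staircase d A B : (A <= d.+1)%N -> (B <= d.+1)%N ->
  \dim (staircase d A B) = (2 * d.+1 - (A + B))%N.
Proof.
move=> Ad Bd; rewrite dim_mx_zero_on.
rewrite (card_staircase (b := fun i : 'I_2 => if i == ord0 then A else B)).
  by rewrite big_ord_recl big_ord1.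
by move=> i; case: (i == ord0).
Qed.

End Subspaces.

Theorem proposition3p7 (C : numClosedFieldType) (d n : nat) :
  (n <= d.+1)%N ->
  let x : 'cV[{poly C}]_2 := truncV d ('X^n *: e1 C) in
  (forall v : 'cV[{poly C}]_2, inVd d v ->
     (mu_zero d x v <-> Wsub d (n.+1 %/ 2) (d %/ 2 + 1) v)) /\
  (exists U : {vspace 'M[C]_(2, d.+1)},
     (forall v : 'cV[{poly C}]_2, inVd d v ->
        (mu_zero d x v <-> coords d v \in U)) /\
     (if (d <= 1)%N && (n == 0%N)
      then (2 * d.+1 - \dim U)%N = 1%N
      else (2 <= 2 * d.+1 - \dim U)%N)).
Proof.
move=> nd x.
have Ad : (n.+1 %/ 2 <= d.+1)%N by lia.
have Bd : (d %/ 2 + 1 <= d.+1)%N by lia.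
split=> [v vd|].
  by rewrite mu_zero_iff // Wsub_vanishes //; lia.
exists (staircase C d (n.+1 %/ 2) (d %/ 2 + 1)); split=> [v vd|].
  by rewrite mu_zero_iff // mem_coords_staircase.
rewrite dim_staircase //; case: ifP => /andP; lia.
Qed.
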